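(* Let $\mathbf{S}=[\mathbf{s}_1,\dots,\mathbf{s}_K]^T\in\mathbb{R}^{K\times 3}$ collect the user positions, and let $F_{\mathsf{P}}$ denote the beamforming policy, i.e., the map assigning to $\mathbf{S}$ the coefficient matrix $\mathbf{B}=[b_{jk}]\in\mathbb{C}^{K\times K}$ of the optimal beamforming $\mathsf{V}_k(\mathbf{r})=\sum_{j=1}^K b_{jk}\mathsf{H}_j^*(\mathbf{r})$, $k=1,\dots,K$, of the problem \[ \max_{\mathsf{V}_1,\dots,\mathsf{V}_K}\ \sum_{k=1}^K \log_2\!\left(1+\frac{A\left|\int_{\mathcal{A}}\mathsf{H}_k(\mathbf{r})\mathsf{V}_k(\mathbf{r})\,d\mathbf{r}\right|^2}{\sum_{j\neq k}A\left|\int_{\mathcal{A}}\mathsf{H}_k(\mathbf{r})\mathsf{V}_j(\mathbf{r})\,d\mathbf{r}\right|^2+\sigma_0^2}\right)\quad\text{s.t.}\quad \sum_{k=1}^K\int_{\mathcal{A}}|\mathsf{V}_k(\mathbf{r})|^2d\mathbf{r}=P_{\max}. \] Then for every $K\times K$ permutation matrix $\boldsymbol{\Pi}$, if $\mathbf{B}=F_{\mathsf{P}}(\mathbf{S})$ then $\boldsymbol{\Pi}^T\mathbf{B}\boldsymbol{\Pi}=F_{\mathsf{P}}(\boldsymbol{\Pi}^T\mathbf{S})$.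
   Context: A base station with a continuous aperture array occupying $\mathcal{A}\subseteq\mathbb{R}^3$ serves $K$ users; user $k$'s aperture is centered at $\mathbf{s}_k\in\mathbb{R}^3$. All users have the same aperture area $A>0$ and the same noise variance $\sigma_0^2>0$; $P_{\max}>0$. The channel of user $k$ depends on $\mathbf{s}_k$ only, $\mathsf{H}_k(\mathbf{r})=\mathsf{H}(\mathbf{r},\mathbf{s}_k)$, with \[ \mathsf{H}(\mathbf{r},\mathbf{s})=\sqrt{\frac{\mathbf{e}_r^T(\mathbf{s}-\mathbf{r})}{\|\mathbf{r}-\mathbf{s}\|}}\cdot\frac{jk_0\eta e^{-jk_0\|\mathbf{r}-\mathbf{s}\|}}{4\pi\|\mathbf{r}-\mathbf{s}\|}\left(1+\frac{j/k_0}{\|\mathbf{r}-\mathbf{s}\|}-\frac{1/k_0^2}{\|\mathbf{r}-\mathbf{s}\|^2}\right), \] where $\mathbf{e}_r$ is the normal vector of the base-station aperture, $\eta=120\pi$, $k_0=2\pi/\lambda$. It is known that an optimal beamforming lies in the span of $\mathsf{H}_1^*,\dots,\mathsf{H}_K^*$, so it is represented by $\mathbf{B}$; the policy $F_{\mathsf{P}}$ is treated as a well-defined function of $\mathbf{S}$. A permutation matrix $\boldsymbol{\Pi}$ reorders rows via $\boldsymbol{\Pi}^T\mathbf{S}$. *)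

From HB Require Import structures.
From mathcomp Require Import all_boot all_order all_algebra all_fingroup.
From mathcomp Require Import all_classical all_reals all_analysis.
From mathcomp Require Import complex.
Set Implicit Arguments. Unset Strict Implicit. Unset Printing Implicit Defensive.
Import Order.TTheory GRing.Theory Num.Theory.
Local Open Scope classical_set_scope.
Local Open Scope ring_scope.

Section Defs.
Variable R : realType.

(* points of R^3, as a product type so that Lebesgue measure is available *)
Definition pt3 := ((R * R) * R)%type.

Definition px (p : pt3) : R := p.1.1.
Definition py (p : pt3) : R := p.1.2.
Definition pz (p : pt3) : R := p.2.

Definition dot3 (p q : pt3) : R := px p * px q + py p * py q + pz p * pz q.
Definition sub3 (p q : pt3) : pt3 := ((px p - px q, py p - py q), pz p - pz q).
Definition norm3 (p : pt3) : R := Num.sqrt (dot3 p p).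

Definition pt_of_row (v : 'rV[R]_3) : pt3 := ((v 0 0, v 0 1), v 0 2).

Definition leb3 := ((@lebesgue_measure R \x @lebesgue_measure R) \x @lebesgue_measure R)%E.

Definition cint (A : set pt3) (f : pt3 -> R[i]) : R[i] :=
  (Rintegral leb3 A (fun r => complex.Re (f r)) +i* Rintegral leb3 A (fun r => complex.Im (f r)))%C.

Definition nsq (z : R[i]) : R := complex.Re z ^+ 2 + complex.Im z ^+ 2.

Definition cexpi (x : R) : R[i] := (cos x +i* sin x)%C.

(* channel H(r, s); er = normal of the BS aperture, k0 = 2 pi / lambda, eta = 120 pi *)
Definition chan (lambda : R) (er : pt3) (r s : pt3) : R[i] :=
  let k0 := 2 * pi / lambda in
  let eta := 120 * pi in
  let d := norm3 (sub3 r s) in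
  ((Num.sqrt (dot3 er (sub3 s r) / d))%:C
   * ((0 +i* (k0 * eta)) * cexpi (- (k0 * d)) / (4 * pi * d)%:C)
   * (1 + (0 +i* (1 / k0 / d)) - (1 / k0 ^+ 2 / d ^+ 2)%:C))%C.

Definition upos (K : nat) (S : 'M[R]_(K, 3)) (k : 'I_K) : pt3 := pt_of_row (row k S).

Definition beam_of (lambda : R) (er : pt3) (K : nat) (S : 'M[R]_(K, 3))
  (B : 'M[R[i]]_K) (k : 'I_K) (r : pt3) : R[i] :=
  \sum_(j < K) B j k * ((chan lambda er r (upos S j))^*)%C.

Definition sum_rate (Aset : set pt3) (Aar sigma2 lambda : R) (er : pt3) (K : nat)
  (S : 'M[R]_(K, 3)) (V : 'I_K -> pt3 -> R[i]) : R :=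
  \sum_(k < K)
    let I j := nsq (cint Aset (fun r => chan lambda er r (upos S k) * V j r)) in
    ln (1 + Aar * I k / (\sum_(j < K | j != k) Aar * I j + sigma2)) / ln 2.

Definition feasible (Aset : set pt3) (Pmax : R) (K : nat) (V : 'I_K -> pt3 -> R[i]) : Prop :=
  (forall k, measurable_fun Aset (fun r => complex.Re (V k r))
          /\ measurable_fun Aset (fun r => complex.Im (V k r))
          /\ leb3.-integrable Aset (fun r => (nsq (V k r))%:E))
  /\ \sum_(k < K) Rintegral leb3 Aset (fun r => nsq (V k r)) = Pmax.

Definition optimal_B (Aset : set pt3) (Aar sigma2 Pmax lambda : R) (er : pt3) (K : nat)
  (S : 'M[R]_(K, 3)) (B : 'M[R[i]]_K) : Prop :=
  feasible Aset Pmax (beam_of lambda er S B)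
  /\ forall V, feasible Aset Pmax V ->
       sum_rate Aset Aar sigma2 lambda er S V
       <= sum_rate Aset Aar sigma2 lambda er S (beam_of lambda er S B).

End Defs.

From HB Require Import structures.
From mathcomp Require Import all_boot all_order all_algebra all_fingroup.
From mathcomp Require Import all_classical all_reals all_analysis.
From mathcomp Require Import complex.
Import Order.TTheory GRing.Theory Num.Theory.
Local Open Scope classical_set_scope.
Local Open Scope ring_scope.

(* Relabelling the users by a permutation p (rows of S, and the beamformers
   V_k along with them) only permutes the summands of the sum rate, the
   interference terms inside each summand and the terms of the power
   constraint.  It therefore maps the feasible set onto itself and preserves
   the objective, hence maps maximizers to maximizers; no property of the
   channel, the aperture or the constants is used.  Since
   V_k = sum_j b_jk H_j^*, relabelling V means permuting both the rows (the
   channels H_j) and the columns (the users k) of B. *)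

Section UserRelabelling.
Variables (R : realType) (K : nat) (Aset : set (pt3 R)) (er : pt3 R)
  (Aar sigma2 Pmax lambda : R).

Lemma upos_row_perm (p : 'S_K) (S : 'M[R]_(K, 3)) k :
  upos (row_perm p S) k = upos S (p k).
Proof. by rewrite /upos /pt_of_row !mxE. Qed.

Lemma beam_of_row_col_perm (p : 'S_K) (S : 'M[R]_(K, 3)) (B : 'M[R[i]]_K) :
  beam_of lambda er (row_perm p S) (row_perm p (col_perm p B)) =
  (fun k => beam_of lambda er S B (p k)).
Proof.
apply/funext => k; apply/funext => r.
rewrite /beam_of [RHS](reindex_inj (@perm_inj _ p)).
by apply: eq_bigr => j _; rewrite upos_row_perm !mxE.
Qed.

Lemma feasible_perm (p : 'S_K) (V : 'I_K -> pt3 R -> R[i]) :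
  feasible Aset Pmax (fun k => V (p k)) <-> feasible Aset Pmax V.
Proof.
rewrite /feasible [in X in _ <-> X](reindex_inj (@perm_inj _ p)).
split=> -[hV ?]; split=> // k.
by have := hV (p^-1 k)%g; rewrite permKV.
Qed.

Lemma sum_rate_row_perm (p : 'S_K) (S : 'M[R]_(K, 3)) V :
  sum_rate Aset Aar sigma2 lambda er (row_perm p S) (fun k => V (p k)) =
  sum_rate Aset Aar sigma2 lambda er S V.
Proof.
rewrite /sum_rate [RHS](reindex_inj (@perm_inj _ p)).
apply: eq_bigr => k _; rewrite /= upos_row_perm.
rewrite [in RHS](reindex_inj (@perm_inj _ p)).
by under [in RHS]eq_bigl => j do rewrite (inj_eq (@perm_inj _ p)).
Qed.

Lemma optimal_B_row_col_perm (p : 'S_K) (S : 'M[R]_(K, 3)) (B : 'M[R[i]]_K) :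
  optimal_B Aset Aar sigma2 Pmax lambda er S B ->
  optimal_B Aset Aar sigma2 Pmax lambda er (row_perm p S)
    (row_perm p (col_perm p B)).
Proof.
move=> [feasB optB]; rewrite /optimal_B beam_of_row_col_perm.
split=> [|V feasV]; first exact/feasible_perm.
have relabelV : V = (fun k => V (p^-1 k)%g) \o p.
  by apply/funext => k /=; rewrite permK.
rewrite relabelV !sum_rate_row_perm; apply: optB.
by move: feasV; rewrite {1}relabelV => /feasible_perm.
Qed.

Lemma optimal_B_row_col_permE (p : 'S_K) (S : 'M[R]_(K, 3)) (B : 'M[R[i]]_K) :
  optimal_B Aset Aar sigma2 Pmax lambda er (row_perm p S)
    (row_perm p (col_perm p B)) <->
  optimal_B Aset Aar sigma2 Pmax lambda er S B.
Proof.
split; last exact: optimal_B_row_col_perm.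
move/(optimal_B_row_col_perm p^-1).
by rewrite col_row_permC -!row_permM -col_permM mulVg !row_perm1 col_perm1.
Qed.

End UserRelabelling.

Theorem proposition2 (R : realType) (K : nat) (Aset : set (pt3 R)) (er : pt3 R)
  (Aar sigma2 Pmax lambda : R)
  (hAset : measurable Aset) (hA : 0 < Aar) (hsigma : 0 < sigma2)
  (hP : 0 < Pmax) (hlambda : 0 < lambda)
  (S : 'M[R]_(K, 3)) (B : 'M[complex R]_K) (s : 'S_K) :
  optimal_B Aset Aar sigma2 Pmax lambda er S B <->
  optimal_B Aset Aar sigma2 Pmax lambda er ((perm_mx s)^T *m S)
    ((perm_mx s)^T *m B *m perm_mx s).
Proof.
rewrite !tr_perm_mx -!row_permE -[s in perm_mx s]invgK -col_permE.
by rewrite col_row_permC; apply: iff_sym; apply: optimal_B_row_col_permE.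
Qed.
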